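(* Let $D\ge1$, let $Q_D$ be the $D$-dimensional hypercube on $X=\{0,1\}^D$ with adjacency matrix $A$, and let $B$ be a symmetric $A$-like matrix. Then: (i) $B_{xx}=B_{yy}$ for all $x,y\in X$; (ii) if $x,z\in X$ satisfy $\partial(x,z)=2$ and $y,w$ are the two vertices adjacent to both $x$ and $z$, then $B_{xy}=B_{zw}$ and $B_{yz}=B_{wx}$.
   Context: $Q_D$ is the graph with vertex set $X=\{0,1\}^D$, two vertices adjacent iff they differ in exactly one coordinate; $\partial$ is the path-length distance (equal to the number of coordinates in which two vertices differ). Matrices are real with rows and columns indexed by $X$. A matrix $B$ is $A$-like if $BA=AB$ and $B_{xy}=0$ for all $x,y\in X$ that are neither equal nor adjacent. *)

From mathcomp Require Import all_boot all_order all_algebra.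
Set Implicit Arguments. Unset Strict Implicit. Unset Printing Implicit Defensive.
Import Order.TTheory GRing.Theory Num.Theory.
Local Open Scope ring_scope.

Definition vert (D : nat) := {ffun 'I_D -> bool}.

(* Hamming (= path-length) distance in Q_D. *)
Definition hdist (D : nat) (x y : vert D) : nat := #|[set i | x i != y i]|.

Definition adj (D : nat) (x y : vert D) : bool := hdist x y == 1%N.

Definition Xmat (R : Type) (D : nat) := vert D -> vert D -> R.

Definition adjA (R : nzRingType) (D : nat) : Xmat R D :=
  fun x y => if adj x y then 1 else 0.

Definition xmul (R : nzRingType) (D : nat) (M N : Xmat R D) : Xmat R D :=
  fun x z => \sum_(y : vert D) M x y * N y z.

Definition symmetric_mat (R : Type) (D : nat) (B : Xmat R D) : Prop :=
  forall x y, B x y = B y x.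

Definition A_like (R : nzRingType) (D : nat) (B : Xmat R D) : Prop :=
  (forall x z, xmul B (@adjA R D) x z = xmul (@adjA R D) B x z) /\
  (forall x y, x != y -> ~~ adj x y -> B x y = 0).

From mathcomp Require Import all_boot all_order all_algebra.
From mathcomp Require Import lra.
Set Implicit Arguments. Unset Strict Implicit. Unset Printing Implicit Defensive.
Import Order.TTheory GRing.Theory Num.Theory.

(* Comparing the two sides of BA = AB entrywise: at an edge xy only the
   diagonal entries B_xx and B_yy survive, because Q_D has no triangles, so
   the diagonal is constant on the connected graph Q_D.  At a pair x, z at
   distance 2 with common neighbours y, w one gets
   B_xy + B_xw = B_yz + B_wz, and the same identity for the pair y, w
   (whose common neighbours are x, z); with B symmetric these two linear
   equations give B_xy = B_zw and B_yz = B_wx. *)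

Lemma neq_addb (a b c : bool) : (a != c) = (a != b) (+) (b != c).
Proof. by case: a; case: b; case: c. Qed.

Section Hypercube.
Variable D : nat.
Implicit Types x y z u w : vert D.

Lemma adjC x y : adj x y = adj y x.
Proof.
rewrite /adj /hdist (_ : [set i | x i != y i] = [set i | y i != x i]) //.
by apply/setP => i; rewrite !inE eq_sym.
Qed.

Lemma hdist_eq0 x y : (hdist x y == 0%N) = (x == y).
Proof.
rewrite cards_eq0; apply/eqP/eqP => [/setP E | ->].
  by apply/ffunP => i; move: (E i); rewrite !inE => /negbFE/eqP.
by apply/setP => i; rewrite !inE eqxx.
Qed.

Lemma adj_coord x y : adj x y -> exists k, forall i, (x i != y i) = (i == k).
Proof.
move=> /cards1P [k /setP Ek]; exists k => i.
by move: (Ek i); rewrite !inE.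
Qed.

Lemma eq_of_neq_coord x y u : (forall i, (x i != u i) = (x i != y i)) -> u = y.
Proof.
move=> E; apply/ffunP => i; move: (E i).
by case: (x i); case: (u i); case: (y i).
Qed.

Lemma adj2_coord x y z : adj x y -> adj y z ->
  exists a b, (forall i, (x i != y i) = (i == a)) /\
              (forall i, (x i != z i) = (i == a) (+) (i == b)).
Proof.
move=> /adj_coord [a Ha] /adj_coord [b Hb]; exists a, b; split => // i.
by rewrite (neq_addb _ (y i)) Ha Hb.
Qed.

Lemma adj2_hdist x y z : adj x y -> adj y z -> x != z -> hdist x z = 2%N.
Proof.
move=> Hxy Hyz; have [a [b [_ Hb]]] := adj2_coord Hxy Hyz.
have [Eab | Nab] := eqVneq a b.
  rewrite -hdist_eq0 cards_eq0 => /eqP []; apply/setP => i.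
  by rewrite !inE Hb Eab addbb.
rewrite /hdist (_ : [set i | x i != z i] = [set a; b]) ?cards2 ?Nab //.
by apply/setP => i; rewrite !inE Hb; have [->|] := eqVneq i a; rewrite ?(negPf Nab).
Qed.

Lemma adj_triangle_free x y z : adj x y -> adj y z -> ~~ adj x z.
Proof.
move=> Hxy Hyz; have [<- | Nxz] := eqVneq x z.
  by rewrite /adj; move: (eqxx x); rewrite -hdist_eq0 => /eqP ->.
by rewrite /adj (adj2_hdist Hxy Hyz Nxz).
Qed.

Lemma hdist2_adj_coord x y z : hdist x z = 2%N -> adj x y -> adj y z ->
  exists a, (forall i, (x i != y i) = (i == a)) /\ x a != z a.
Proof.
move=> H2 Hxy Hyz; have [a [b [Ha Hb]]] := adj2_coord Hxy Hyz.
exists a; split => //; rewrite Hb eqxx /=.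
apply/eqP => Eab; suff : hdist x z == 0%N by rewrite H2.
by rewrite cards_eq0; apply/eqP/setP => i; rewrite !inE Hb Eab addbb.
Qed.

(* A common neighbour of x and z is x with one coordinate of the
   two-element set [set i | x i != z i] flipped. *)
Lemma hdist2_common_nb x z y w u : hdist x z = 2%N ->
  adj x y -> adj y z -> adj x w -> adj w z -> y != w -> adj x u -> adj u z ->
  u = y \/ u = w.
Proof.
move=> H2 Hxy Hyz Hxw Hwz Nyw Hxu Huz.
have [a [Ha Sa]] := hdist2_adj_coord H2 Hxy Hyz.
have [b [Hb Sb]] := hdist2_adj_coord H2 Hxw Hwz.
have Nab : a != b.
  apply: contraNneq Nyw => Eab; apply/eqP/esym/(eq_of_neq_coord (x := x)) => i.
  by rewrite Ha Hb Eab.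
have S_ab : [set i | x i != z i] = [set a; b].
  apply/esym/eqP; rewrite eqEcard cards2 Nab -/(hdist x z) H2 andbT.
  by apply/subsetP => i; rewrite !inE => /orP [] /eqP ->.
have [c [Hc Sc]] := hdist2_adj_coord H2 Hxu Huz.
have : c \in [set i | x i != z i] by rewrite inE.
rewrite S_ab !inE => /orP [] /eqP Ec; [left | right];
  by apply: (eq_of_neq_coord (x := x)) => i; rewrite Hc ?Ha ?Hb Ec.
Qed.

Lemma hdist_step x y n : hdist x y = n.+1 -> exists u, adj x u /\ hdist u y = n.
Proof.
move=> Hn; have : (0 < hdist x y)%N by rewrite Hn.
move=> /card_gt0P [k]; rewrite inE => Hk.
exists [ffun i => if i == k then ~~ x i else x i]; split.
  apply/cards1P; exists k; apply/setP => i.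
  by rewrite !inE ffunE; case: (i == k); case: (x i).
have := cardsD1 k [set i | x i != y i]; rewrite inE Hk -/(hdist x y) Hn add1n.
move=> [] ->; apply: eq_card => i; rewrite !inE ffunE.
have [->|//] := eqVneq i k.
by move: Hk; case: (x k); case: (y k).
Qed.

End Hypercube.

Section SupportedSums.
Local Open Scope ring_scope.
Variables (T : finType) (V : nmodType) (F : T -> V).

Lemma sum_supp1 (P : pred T) a : P a -> (forall u, P u -> u != a -> F u = 0) ->
  \sum_(u | P u) F u = F a.
Proof. by move=> Pa F0; rewrite (bigD1 a) //= big1 ?addr0 // => u /andP []; apply: F0. Qed.

Lemma sum_supp2 (P : pred T) a b : a != b -> P a -> P b ->
  (forall u, P u -> u != a -> u != b -> F u = 0) ->
  \sum_(u | P u) F u = F a + F b.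
Proof.
move=> Nab Pa Pb F0; rewrite (bigD1 a) //= (sum_supp1 (a := b)) //=.
  by rewrite Pb eq_sym.
by move=> u /andP [Pu Nua] Nub; apply: F0.
Qed.

End SupportedSums.

Section ALike.
Local Open Scope ring_scope.
Variables (R : nzRingType) (D : nat) (B : Xmat R D).
Hypothesis BA_AB : forall x z, xmul B (@adjA R D) x z = xmul (@adjA R D) B x z.
Hypothesis B_supp : forall x y, x != y -> ~~ adj x y -> B x y = 0.
Implicit Types x y z u w : vert D.

Lemma xmul_adjAr x z : xmul B (@adjA R D) x z = \sum_(u | adj u z) B x u.
Proof.
by rewrite big_mkcond; apply: eq_bigr => u _; rewrite /adjA; case: adj;
  rewrite ?mulr1 ?mulr0.
Qed.

Lemma xmul_adjAl x z : xmul (@adjA R D) B x z = \sum_(u | adj x u) B u z.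
Proof.
by rewrite big_mkcond; apply: eq_bigr => u _; rewrite /adjA; case: adj;
  rewrite ?mul1r ?mul0r.
Qed.

Lemma A_like_adj_diag x y : adj x y -> B x x = B y y.
Proof.
move=> Hxy; have := BA_AB x y; rewrite xmul_adjAr xmul_adjAl.
rewrite (sum_supp1 (a := x)) ?(sum_supp1 (a := y)) // => u Hu Nu.
  have [Huy|Nuy] := boolP (adj u y); last by rewrite B_supp.
  by rewrite (negPf (adj_triangle_free Hu Huy)) in Hxy.
have [Hxu|Nxu] := boolP (adj x u); last by rewrite B_supp // eq_sym.
by rewrite (negPf (adj_triangle_free Hxu Hu)) in Hxy.
Qed.

Lemma A_like_hdist2 x z y w : hdist x z = 2%N ->
  adj x y -> adj y z -> adj x w -> adj w z -> y != w ->
  B x y + B x w = B y z + B w z.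
Proof.
move=> H2 Hxy Hyz Hxw Hwz Nyw; have := BA_AB x z.
have Nxz : ~~ adj x z by rewrite /adj H2.
have common u : adj x u -> adj u z -> u != y -> u != w -> False.
  by move=> Hxu Huz Nuy Nuw; case: (hdist2_common_nb H2 Hxy Hyz Hxw Hwz Nyw Hxu Huz)
    => Eu; rewrite Eu eqxx in Nuy Nuw.
rewrite xmul_adjAr xmul_adjAl (sum_supp2 Nyw) ?(sum_supp2 Nyw) // => u Hu Nuy Nuw.
  have [Euz|Nuz] := eqVneq u z; first by rewrite -Euz Hu in Nxz.
  have [Huz|Nuz'] := boolP (adj u z); last by rewrite B_supp.
  by case: (common u Hu Huz Nuy Nuw).
have [Eux|Nux] := eqVneq u x; first by rewrite -Eux Hu in Nxz.
have [Hxu|Nxu] := boolP (adj x u); last by rewrite B_supp // eq_sym.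
by case: (common u Hxu Hu Nuy Nuw).
Qed.

End ALike.

Theorem lemma8p2 (R : realFieldType) (D : nat) (B : Xmat R D) :
  (1 <= D)%N -> symmetric_mat B -> A_like B ->
  (forall x y : vert D, B x x = B y y) /\
  (forall x z y w : vert D,
     hdist x z = 2%N -> adj x y -> adj y z -> adj x w -> adj w z -> y != w ->
     B x y = B z w /\ B y z = B w x).
Proof.
move=> _ Bsym [BA_AB B_supp]; split.
  move=> x y; move Hn : (hdist x y) => n; elim: n x Hn => [|n IH] x Hn.
    by move/eqP: Hn; rewrite hdist_eq0 => /eqP ->.
  have [u [Hxu Hu]] := hdist_step Hn.
  by rewrite (A_like_adj_diag BA_AB B_supp Hxu) (IH u Hu).
move=> x z y w H2 Hxy Hyz Hxw Hwz Nyw.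
have Nxz : x != z by rewrite -hdist_eq0 H2.
have H2' : hdist y w = 2%N by apply: (adj2_hdist (y := x)); rewrite // adjC.
have e1 := A_like_hdist2 BA_AB B_supp H2 Hxy Hyz Hxw Hwz Nyw.
have Hyx : adj y x by rewrite adjC.
have Hzw : adj z w by rewrite adjC.
have e2 := A_like_hdist2 BA_AB B_supp H2' Hyx Hxw Hyz Hzw Nxz.
rewrite (Bsym y x) in e2; rewrite (Bsym w z) in e1; rewrite (Bsym w x).
move: e1 e2; move: (B x y) (B x w) (B y z) (B z w) => a b c d e1 e2.
split; lra.
Qed.
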